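(* Let $d\ge1$ and let $\theta\in\mathbb R^d$ be split into $B$ disjoint blocks $\theta^{(1)},\dots,\theta^{(B)}$ of sizes $d_1,\dots,d_B\ge1$ with $d_1+\dots+d_B=d$. Let $R_b=-(d_b-2)_+$ and $\pi_{\mathrm{MBS}}(\theta)=\prod_{b=1}^B\|\theta^{(b)}\|^{R_b}\cdot\|\theta\|^{-\gamma}$. For $N>0$ let $p(y\mid\theta)$ be the density of $\mathrm N_d(\theta,N^{-1}I_d)$. If $0\le\gamma<B(R_b+d_b)$ for every $b$, then $m_{\mathrm{MBS}}(y)=\int p(y\mid\theta)\pi_{\mathrm{MBS}}(\theta)\,\mathrm d\theta<\infty$ for every $y\in\mathbb R^d$.
   Context: $(x)_+=\max(x,0)$. *)

From HB Require Import structures.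
From mathcomp Require Import all_boot all_order all_algebra.
From mathcomp Require Import all_classical all_reals all_analysis.
Set Implicit Arguments. Unset Strict Implicit. Unset Printing Implicit Defensive.
Import Order.TTheory GRing.Theory Num.Theory.
Import numFieldNormedType.Exports.
Local Open Scope classical_set_scope.
Local Open Scope ring_scope.

Section MBS.
Variable R : realType.

(* Lebesgue integral over R^n (points = n-tuples of reals), written as the
   iterated integral of Lebesgue measure on R in each coordinate.  For the
   nonnegative integrands used here this is the integral w.r.t. the
   n-dimensional Lebesgue measure (Tonelli). *)
Fixpoint leb_int_tuple (n : nat) : (n.-tuple R -> \bar R) -> \bar R :=
  match n return (n.-tuple R -> \bar R) -> \bar R with
  | 0 => fun f => f [tuple]
  | n'.+1 => fun f =>
      (\int[@lebesgue_measure R]_(x in [set: R])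
          leb_int_tuple (fun t : n'.-tuple R => f [tuple of x :: t]))%E
  end.

Variables (d B : nat) (blk : 'I_d -> 'I_B).

Definition dimb (b : 'I_B) : nat := #|[set i | blk i == b]|.

Definition Rb (b : 'I_B) : R := - Num.max ((dimb b)%:R - 2) 0.

Definition block_norm (theta : d.-tuple R) (b : 'I_B) : R :=
  Num.sqrt (\sum_(i < d | blk i == b) (tnth theta i) ^+ 2).

Definition tnorm (theta : d.-tuple R) : R :=
  Num.sqrt (\sum_(i < d) (tnth theta i) ^+ 2).

Definition pi_MBS (gamma : R) (theta : d.-tuple R) : R :=
  (\prod_(b < B) powR (block_norm theta b) (Rb b)) * powR (tnorm theta) (- gamma).

Definition gauss_density (N : R) (y theta : d.-tuple R) : R :=
  powR (N / (2 * pi)) (d%:R / 2) *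
  expR (- (N / 2) * \sum_(i < d) (tnth y i - tnth theta i) ^+ 2).

Definition m_MBS (gamma N : R) (y : d.-tuple R) : \bar R :=
  leb_int_tuple (fun theta => (gauss_density N y theta * pi_MBS gamma theta)%:E).

End MBS.

Arguments Rb {R} [d B] blk b.

From mathcomp Require Import all_boot all_order all_algebra.
From mathcomp Require Import all_classical all_reals all_analysis.
From mathcomp Require Import measurable_realfun ring lra.
Set Implicit Arguments.
Unset Strict Implicit.
Unset Printing Implicit Defensive.
Import Order.TTheory GRing.Theory Num.Theory.
Import numFieldNormedType.Exports.
Local Open Scope ring_scope.

(* The block norms satisfy |theta_i| <= ||theta^(b)|| <= ||theta|| for every coordinate i of
   block b, and all the exponents R_b - gamma/B are nonpositive.  Hence
     pi_MBS(theta) <= prod_b ||theta^(b)||^(R_b - gamma/B) <= prod_i |theta_i|^(-alpha_i)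
   with alpha_i = (gamma/B - R_b)/d_b, and the hypothesis gamma < B (R_b + d_b) says exactly
   that alpha_i < 1.  The Gaussian likelihood factorises over the coordinates, so m_MBS(y) is
   bounded by a constant times the product of the one-dimensional integrals
   int exp(-N (y_i - x)^2 / 2) |x|^(-alpha_i) dx, which are finite because |x|^(-alpha) is
   integrable near 0 when alpha < 1. *)

(* Unlike [ge0_le_integral], no measurability is assumed: the inner integrals of
   [leb_int_tuple] are not known to be measurable. *)
Lemma ge0_le_integral_nonmeas d (T : measurableType d) (R : realType)
    (mu : {measure set T -> \bar R}) (f g : T -> \bar R) :
  (forall x, 0 <= f x)%E -> (forall x, f x <= g x)%E ->
  (\int[mu]_x f x <= \int[mu]_x g x)%E.
Proof.
move=> f0 fg; have g0 x : (0 <= g x)%E := le_trans (f0 x) (fg x).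
rewrite (ge0_integralTE mu f0) (ge0_integralTE mu g0).
apply: ge_ereal_sup => _ [h hf <-]; apply: ereal_sup_ubound.
by exists h => // x; exact: le_trans (hf x) (fg x).
Qed.

Section iterated_integral.
Context {R : realType}.
Local Notation mu := (@lebesgue_measure R).
Local Open Scope ereal_scope.

Lemma leb_int_tuple_ge0 n (f : n.-tuple R -> \bar R) :
  (forall t, 0 <= f t) -> 0 <= leb_int_tuple f.
Proof.
elim: n f => [|n IH] f f0 /=; first exact: f0.
by apply: integral_ge0 => x _; apply: IH.
Qed.

Lemma le_leb_int_tuple n (f g : n.-tuple R -> \bar R) :
  (forall t, 0 <= f t) -> (forall t, f t <= g t) ->
  leb_int_tuple f <= leb_int_tuple g.
Proof.
elim: n f g => [|n IH] f g f0 fg /=; first exact: fg.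
by apply: ge0_le_integral_nonmeas => x; [apply: leb_int_tuple_ge0 | apply: IH].
Qed.

Lemma leb_int_tuple_prod n (c : \bar R) (F : 'I_n -> R -> \bar R) :
  0 <= c -> (forall i x, 0 <= F i x) -> (forall i, measurable_fun [set: R] (F i)) ->
  leb_int_tuple (fun t : n.-tuple R => c * \prod_(i < n) F i (tnth t i)) =
  c * \prod_(i < n) \int[mu]_x F i x.
Proof.
elim: n c F => [|n IH] c F c0 F0 mF /=; first by rewrite !big_ord0.
transitivity (\int[mu]_x
    ((c * F ord0 x) * \prod_(i < n) \int[mu]_y F (lift ord0 i) y)).
  apply: eq_integral => x _; rewrite -IH ?mule_ge0 //.
  congr leb_int_tuple; apply/funext => t.
  rewrite big_ord_recl tnth0 muleA; congr (_ * _).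
  by apply: eq_bigr => i _; rewrite tnthS.
rewrite ge0_integralZr //; last 3 first.
- by apply: emeasurable_funM => //; exact: mF.
- by move=> x _; apply: mule_ge0.
- by apply: prode_ge0 => i _; apply: integral_ge0.
by rewrite ge0_integralZl // ?big_ord_recl ?muleA //; exact: mF.
Qed.

End iterated_integral.

Section powR.
Context {R : realType}.

Lemma powR_sum (x : R) (I : Type) (r : seq I) (P : pred I) (e : I -> R) : 0 < x ->
  x `^ (\sum_(i <- r | P i) e i) = \prod_(i <- r | P i) x `^ e i.
Proof.
move=> x0; apply: (big_morph (powR x) _ (powRr0 x)) => u v.
by rewrite powRD // (gt_eqF x0) implybT.
Qed.

Lemma le0_ger_powR (r x y : R) : r <= 0 -> 0 < x -> x <= y -> y `^ r <= x `^ r.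
Proof.
move=> r0 x0 xy; have y0 := lt_le_trans x0 xy.
by rewrite /powR !gt_eqF // ler_expR ler_wnM2l // ler_ln.
Qed.

End powR.

Section power_singularity.
Context {R : realType}.
Local Notation mu := (@lebesgue_measure R).

Lemma measurable_normr_powR (r : R) : measurable_fun setT (fun x : R => (`|x| `^ r)%:E).
Proof.
by apply/measurable_EFinP; exact: measurableT_comp (measurable_powR _) (@normr_measurable R _).
Qed.

Lemma ge0_even_integralT (f : R -> \bar R) :
  measurable_fun [set: R] f -> (forall x, 0 <= f x)%E -> f =1 f \o -%R ->
  (\int[mu]_x f x = 2%:E * \int[mu]_(x in `[0%R, +oo[) f x)%E.
Proof.
move=> mf f0 evenf.
rewrite -(setUv `[0%R, +oo[) ge0_integral_setU //=; last 3 first.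
- exact: measurableC.
- by rewrite setUv.
- exact/disj_setPCl.
rewrite setCitvr integral_itv_bndo_bndc; last exact: measurable_funS mf.
have -> : (\int[mu]_(x in `]-oo, 0%R]) f x = \int[mu]_(x in `[0%R, +oo[) f x)%E.
  rewrite ge0_integration_by_substitution0 //.
  by apply: eq_integral => x _; rewrite evenf.
by rewrite mule_natl mule2n.
Qed.

Lemma integral_powRN_itv_cc1 (a e : R) : (0 <= a < 1)%R -> (0 < e < 1)%R ->
  (\int[mu]_(x in `[e, 1%R]) (x `^ (- a))%:E <= ((1 - a)^-1)%:E)%E.
Proof.
move=> /andP[a0 a1] /andP[e0 e1].
pose F x : R := ((1 - a)^-1 * x `^ (1 - a))%R.
have dpowR (r x : R) : (0 < x)%R -> derivable (fun y : R => y `^ r) x 1.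
  by move=> x0; apply: derivable_powR; rewrite in_itv /= x0.
have dF (x : R) : (0 < x)%R -> derivable F x 1.
  by move=> x0; apply: derivableM => //; exact: dpowR.
have cF (x : R) : (0 < x)%R -> {for x, continuous F}.
  by move=> x0; apply/differentiable_continuous/derivable1_diffP/dF.
rewrite (@continuous_FTC2 _ _ F) //.
- rewrite -EFinB lee_fin /F powR1 mulr1 lerBlDr lerDl.
  by rewrite mulr_ge0 ?powR_ge0 // invr_ge0 subr_ge0 ltW.
- apply: continuous_in_subspaceT => x; rewrite inE /= in_itv /= => /andP[ex _].
  exact/differentiable_continuous/derivable1_diffP/dpowR/(lt_le_trans e0 ex).
- split.
  + by move=> x; rewrite in_itv /= => /andP[ex _]; exact/dF/(lt_trans e0 ex).
  + exact/cvg_at_right_filter/cF.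
  + exact/cvg_at_left_filter/cF/(lt_trans e0 e1).
- move=> x; rewrite in_itv /= => /andP[ex _].
  have x0 : (0 < x)%R := lt_trans e0 ex.
  rewrite derive1Ml; last exact: dpowR.
  rewrite powR_derive1 ?in_itv /= ?andbT // mulrA mulVf ?subr_eq0 ?gt_eqF // mul1r.
  by congr (x `^ _); rewrite addrAC subrr add0r.
Qed.

Lemma integral_powRN_itv_oc01 (a : R) : 0 <= a < 1 ->
  (\int[mu]_(x in `]0%R, 1%R]) (x `^ (- a))%:E <= ((1 - a)^-1)%:E)%E.
Proof.
move=> a01.
pose f x := (x `^ (- a))%:E.
pose g n := f \_ `[n.+1%:R^-1, 1%R].
have f0 x : (0 <= f x)%E by rewrite lee_fin powR_ge0.
have g0 n x : (0 <= g n x)%E by apply: erestrict_ge0.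
have mg n : measurable_fun setT (g n).
  apply/(measurable_restrictT _ _).1 => //.
  by apply/measurable_EFinP; apply: measurable_funS (measurable_powR _).
have nd_g x : {homo g ^~ x : m n / (m <= n)%N >-> (m <= n)%E}.
  move=> m n mn; apply: restrict_lee => // y /=; rewrite !in_itv /=.
  move=> /andP[my ->]; rewrite andbT (le_trans _ my) // lef_pV2 ?posrE //.
  by rewrite ler_nat.
have f_lim x : ((f \_ `]0%R, 1%R]) x <= limn (g ^~ x))%E.
  apply: lime_ge; first exact: ereal_nondecreasing_is_cvgn.
  rewrite patchE; case: ifPn => [|_]; last exact: nearW.
  rewrite inE /= in_itv /= => /andP[x0 x1].
  exists (Num.Def.trunc x^-1) => // n /= xn.
  rewrite /g patchE ifT // inE /= in_itv /= x1 andbT -[x]invrK lef_pV2 ?posrE ?invr_gt0 //.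
  by rewrite (ltW (lt_le_trans (truncnS_gt _) _)) // ler_nat.
rewrite integral_mkcond.
apply: le_trans (ge0_le_integral_nonmeas mu (erestrict_ge0 _) f_lim) _ => //.
rewrite monotone_convergence //; apply: lime_le.
  apply: ereal_nondecreasing_is_cvgn => m n mn.
  by apply: ge0_le_integral => //; [exact: mg | exact: mg | move=> x _; exact: nd_g].
exists 1%N => // n /= n1.
rewrite -integral_mkcond integral_powRN_itv_cc1 //.
by rewrite invr_gt0 ltr0n /= invf_lt1 ?ltr0n // ltr1n ltnS.
Qed.

Lemma integral_normr_powRN_itv_cc11 (a : R) : 0 <= a < 1 ->
  (\int[mu]_(x in `[(-1)%R, 1%R]) (`|x| `^ (- a))%:E <= 2%:E * ((1 - a)^-1)%:E)%E.
Proof.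
move=> a01.
pose f (x : R) := (`|x| `^ (- a))%:E.
have mf : measurable_fun setT f := measurable_normr_powR (- a).
rewrite integral_mkcond ge0_even_integralT; last 3 first.
- by apply/(measurable_restrictT _ _).1 => //; exact: measurable_funS mf.
- by apply: erestrict_ge0 => x _; rewrite lee_fin powR_ge0.
- move=> x; rewrite /= !patchE /f normrN; congr (if _ then _ else _).
  by apply/idP/idP; rewrite !inE /= !in_itv /= => /andP[? ?]; apply/andP; split; lra.
rewrite lee_pmul2l // -integral_mkcondr.
have -> : (`[0%R, +oo[ `&` `[(-1)%R, 1%R] = `[0%R, 1%R] :> set R)%classic.
  apply/seteqP; split => x /=; rewrite !in_itv /= ?andbT.
  - by case=> x0 /andP[_ ->]; rewrite x0.
  - by move=> /andP[x0 ->]; rewrite x0 (le_trans _ x0) // lerN10.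
rewrite -integral_itv_obnd_cbnd; last exact: measurable_funS mf.
under eq_integral => x /[!inE] /= /[!in_itv] /= /andP[x0 _] do rewrite gtr0_norm //.
exact: integral_powRN_itv_oc01.
Qed.

(* The value +oo at 0 makes [pi_MBS_le_prod_singular_powR] hold also where a coordinate
   vanishes, at no cost since {0} is Lebesgue-null. *)
Definition singular_powR (a x : R) : \bar R :=
  if x == 0 then +oo%E else (`|x| `^ (- a))%:E.

Lemma singular_powR_gt0 (a x : R) : (0 < singular_powR a x)%E.
Proof.
rewrite /singular_powR; case: ifPn => // x0.
by rewrite lte_fin powR_gt0 // normr_gt0.
Qed.

Lemma measurable_singular_powR (a : R) : measurable_fun setT (singular_powR a).
Proof.
apply: measurable_fun_ifT => //.
- exact: (measurable_fun_eqr (f := id) (g := cst 0)).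
- exact: measurable_normr_powR.
Qed.

Lemma integral_mul_singular_powR (a : R) (f : R -> \bar R) :
  measurable_fun setT f ->
  (\int[mu]_x (f x * singular_powR a x) = \int[mu]_x (f x * (`|x| `^ (- a))%:E))%E.
Proof.
move=> mf; have mD : measurable ([set: R] `\ 0)%classic by apply: measurableD.
have mfs : measurable_fun setT (fun x => f x * singular_powR a x)%E.
  exact: emeasurable_funM (measurable_singular_powR a).
have mfp : measurable_fun setT (fun x => f x * (`|x| `^ (- a))%:E)%E.
  exact: emeasurable_funM (measurable_normr_powR _).
rewrite -(integral_setD1 mD (measurable_funS _ _ mfs)) //.
rewrite -(integral_setD1 mD (measurable_funS _ _ mfp)) //.
apply: eq_integral => x; rewrite inE /= => -[_ /eqP x0].
by rewrite /singular_powR (negbTE x0).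
Qed.

Lemma integral_singular_powR_lty (a : R) (E : R -> R) : 0 <= a < 1 ->
  measurable_fun setT E -> (forall x, 0 <= E x <= 1) ->
  (\int[mu]_x (E x)%:E < +oo)%E ->
  (\int[mu]_x ((E x)%:E * singular_powR a x) < +oo)%E.
Proof.
move=> /andP[a0 a1] mE E01 iE; have E0 x := (andP (E01 x)).1.
rewrite integral_mul_singular_powR; last exact/measurable_EFinP.
pose p := (fun x : R => (`|x| `^ (- a))%:E) \_ `[(-1)%R, 1%R].
have mp : measurable_fun setT p.
  by apply/(measurable_restrictT _ _).1 => //; exact: measurable_funS (measurable_normr_powR _).
have p0 x : (0 <= p x)%E by apply: erestrict_ge0 => y _; rewrite lee_fin powR_ge0.
apply: (@le_lt_trans _ _ (\int[mu]_x ((E x)%:E + p x))%E).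
  apply: ge0_le_integral_nonmeas => x; first by rewrite mule_ge0 // lee_fin ?powR_ge0.
  have [x1|x1] := leP `|x| 1.
    rewrite /p patchE ifT; last by rewrite inE /= in_itv /= -ler_norml.
    rewrite -EFinD lee_fin (@le_trans _ _ (`|x| `^ (- a))) ?lerDr //.
    by rewrite ler_piMl ?powR_ge0 //; case/andP: (E01 x).
  rewrite (@le_trans _ _ (E x)%:E) ?leeDl // lee_fin ler_piMr //.
  rewrite -[leRHS](powRr0 `|x|) ler_powR ?oppr_le0 //; exact: ltW.
rewrite ge0_integralD //; last 2 first.
- by move=> x _; rewrite lee_fin.
- exact/measurable_EFinP.
rewrite lte_add_pinfty // -integral_mkcond.
by rewrite (le_lt_trans (integral_normr_powRN_itv_cc11 _)) ?a0 // -EFinM ltry.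
Qed.

End power_singularity.

Section gaussian.
Context {R : realType}.
Local Notation mu := (@lebesgue_measure R).

Definition gauss_kernel (N m x : R) : R := expR (- (N / 2) * (m - x) ^+ 2).

Lemma gauss_kernel_itv01 (N m x : R) : 0 <= N -> 0 <= gauss_kernel N m x <= 1.
Proof.
move=> N0; rewrite expR_ge0 expR_le1 mulNr oppr_le0.
by rewrite mulr_ge0 ?sqr_ge0 ?divr_ge0.
Qed.

Lemma measurable_gauss_kernel (N m : R) : measurable_fun setT (gauss_kernel N m).
Proof.
apply: measurableT_comp => //; apply: measurable_funM => //.
exact/measurable_funX/measurable_funB.
Qed.

Lemma integral_gauss_kernel_lty (N m : R) : 0 < N ->
  (\int[mu]_x (gauss_kernel N m x)%:E < +oo)%E.
Proof.
move=> N0; pose s := Num.sqrt N^-1.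
have s0 : s != 0 by rewrite sqrtr_eq0 -ltNge invr_gt0.
have peak0 : normal_peak s != 0 by rewrite gt_eqF // normal_peak_gt0.
have kernelE x : gauss_kernel N m x = (normal_peak s)^-1 * normal_pdf m s x.
  rewrite normal_pdfE // mulKf // /normal_fun sqr_sqrtr ?invr_ge0 ?ltW //.
  rewrite /gauss_kernel -(sqrrN (m - x)) opprB; congr expR.
  by field; rewrite gt_eqF.
under eq_integral do rewrite kernelE EFinM.
rewrite ge0_integralZl_EFin //.
- by rewrite integral_normal_pdf mule1 ltry.
- by move=> x _; rewrite lee_fin normal_pdf_ge0.
- by apply/measurable_EFinP; exact: measurable_normal_pdf.
- by rewrite invr_ge0 normal_peak_ge0.
Qed.

Lemma gauss_densityE (d : nat) (N : R) (y theta : d.-tuple R) :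
  gauss_density N y theta =
  powR (N / (2 * pi)) (d%:R / 2) * \prod_(i < d) gauss_kernel N (tnth y i) (tnth theta i).
Proof. by rewrite /gauss_density mulr_sumr expR_sum. Qed.

Lemma gauss_density_ge0 (d : nat) (N : R) (y theta : d.-tuple R) :
  0 <= gauss_density N y theta.
Proof. by rewrite mulr_ge0 ?powR_ge0 ?expR_ge0. Qed.

End gaussian.

Section prior_bound.
Context {R : realType} {d B : nat} (blk : 'I_d -> 'I_B).

Definition coord_exponent (gamma : R) (i : 'I_d) : R :=
  (gamma / B%:R - Rb blk (blk i)) / (dimb blk (blk i))%:R.

Lemma Rb_le0 (b : 'I_B) : Rb blk b <= 0 :> R.
Proof. by rewrite /Rb oppr_le0 le_max lexx orbT. Qed.

Lemma coord_exponent_itv (gamma : R) (i : 'I_d) :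
  (0 < dimb blk (blk i))%N -> 0 <= gamma ->
  gamma < B%:R * (Rb blk (blk i) + (dimb blk (blk i))%:R) ->
  0 <= coord_exponent gamma i < 1.
Proof.
move=> db g0 gB; have r0 := Rb_le0 (blk i).
have B0 : 0 < B%:R :> R by rewrite ltr0n (leq_ltn_trans (leq0n _) (ltn_ord (blk i))).
have gB0 : 0 <= gamma / B%:R by rewrite divr_ge0 // ltW.
have gB1 : gamma / B%:R < Rb blk (blk i) + (dimb blk (blk i))%:R.
  by rewrite ltr_pdivrMr // mulrC.
rewrite /coord_exponent divr_ge0 ?subr_ge0 ?(le_trans r0) //=.
by rewrite ltr_pdivrMr ?ltr0n // mul1r; lra.
Qed.

Lemma sumr_block_const (c : R) (b : 'I_B) : \sum_(i | blk i == b) c = c *+ dimb blk b.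
Proof.
by rewrite sumr_const; congr (_ *+ _); apply: eq_card => i; apply/idP/idP; rewrite inE.
Qed.

Lemma normr_tnth_le_block_norm (theta : d.-tuple R) (i : 'I_d) :
  `|tnth theta i| <= block_norm blk theta (blk i).
Proof.
rewrite /block_norm -sqrtr_sqr ler_sqrt; last by rewrite sumr_ge0 // => j _; exact: sqr_ge0.
by rewrite (bigD1 i) //= lerDl sumr_ge0 // => j _; exact: sqr_ge0.
Qed.

Lemma block_norm_le_tnorm (theta : d.-tuple R) (b : 'I_B) :
  block_norm blk theta b <= tnorm theta.
Proof.
rewrite ler_sqrt; last by rewrite sumr_ge0 // => j _; exact: sqr_ge0.
by rewrite [leLHS]big_mkcond ler_sum // => i _; case: ifP => // _; exact: sqr_ge0.
Qed.

Lemma tnorm_powR_le_prod (theta : d.-tuple R) (gamma : R) :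
  (0 < B)%N -> 0 <= gamma -> (forall b, 0 < block_norm blk theta b) ->
  tnorm theta `^ (- gamma) <= \prod_(b < B) block_norm blk theta b `^ (- (gamma / B%:R)).
Proof.
move=> B0 g0 nb0; have nt0 := lt_le_trans (nb0 (Ordinal B0)) (block_norm_le_tnorm _ _).
have -> : - gamma = \sum_(b < B) - (gamma / B%:R).
  rewrite sumr_const card_ord mulNrn; congr (- _).
  by rewrite -[RHS]mulr_natr mulfVK // pnatr_eq0 -lt0n.
rewrite powR_sum //; apply: ler_prod => b _.
by rewrite powR_ge0 le0_ger_powR ?block_norm_le_tnorm // oppr_le0 divr_ge0.
Qed.

Lemma block_norm_powR_le_prod (theta : d.-tuple R) (b : 'I_B) (e : R) :
  e <= 0 -> (0 < dimb blk b)%N -> (forall i, blk i = b -> tnth theta i != 0) ->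
  block_norm blk theta b `^ e <=
  \prod_(i | blk i == b) `|tnth theta i| `^ (e / (dimb blk b)%:R).
Proof.
move=> e0 db th0.
have coord0 i : blk i = b -> 0 < `|tnth theta i| by move/th0; rewrite normr_gt0.
have nb0 : 0 < block_norm blk theta b.
  have /card_gt0P[i] := db; rewrite inE => /eqP bi.
  by rewrite -bi (lt_le_trans (coord0 _ bi)) // normr_tnth_le_block_norm.
have eE : e = \sum_(i | blk i == b) (e / (dimb blk b)%:R).
  by rewrite sumr_block_const -(mulr_natr (e / _)) mulfVK // pnatr_eq0 -lt0n.
rewrite {1}eE powR_sum //; apply: ler_prod => i /eqP bi.
rewrite powR_ge0 le0_ger_powR ?coord0 // -?bi ?normr_tnth_le_block_norm //.
by rewrite pmulr_lle0 // invr_gt0 ltr0n bi.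
Qed.

Lemma pi_MBS_le_prod_powR (gamma : R) (theta : d.-tuple R) :
  (0 < B)%N -> (forall b, 0 < dimb blk b)%N -> 0 <= gamma ->
  (forall i, tnth theta i != 0) ->
  pi_MBS blk gamma theta <= \prod_(i < d) `|tnth theta i| `^ (- coord_exponent gamma i).
Proof.
move=> B0 db g0 th0; set nb := block_norm blk theta.
have nb0 b : 0 < nb b.
  have /card_gt0P[i] := db b; rewrite inE => /eqP <-.
  by rewrite (lt_le_trans _ (normr_tnth_le_block_norm _ _)) ?normr_gt0.
have e0 b : Rb blk b - gamma / B%:R <= 0.
  by rewrite subr_le0 (le_trans (Rb_le0 _)) // divr_ge0.
rewrite /pi_MBS (le_trans (ler_wpM2l _ (tnorm_powR_le_prod B0 g0 nb0))) //.
  by rewrite prodr_ge0 // => b _; exact: powR_ge0.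
rewrite -big_split /=.
under eq_bigr => b _ do rewrite -powRD ?(gt_eqF (nb0 b)) ?implybT //.
rewrite (partition_big blk xpredT) //=; apply: ler_prod => b _.
rewrite powR_ge0 /=.
under [leRHS]eq_bigr => i /eqP bi do rewrite /coord_exponent bi -mulNr opprB.
by apply: block_norm_powR_le_prod => // i _; exact: th0.
Qed.

End prior_bound.

Section marginal.
Context {R : realType} {d B : nat} (blk : 'I_d -> 'I_B).

Lemma pi_MBS_ge0 (gamma : R) (theta : d.-tuple R) : 0 <= pi_MBS blk gamma theta.
Proof. by rewrite mulr_ge0 ?powR_ge0 // prodr_ge0 // => b _; exact: powR_ge0. Qed.

Lemma pi_MBS_le_prod_singular_powR (gamma : R) (theta : d.-tuple R) :
  (0 < B)%N -> (forall b, 0 < dimb blk b)%N -> 0 <= gamma ->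
  ((pi_MBS blk gamma theta)%:E <=
   \prod_(i < d) singular_powR (coord_exponent blk gamma i) (tnth theta i))%E.
Proof.
move=> B0 db g0; have [/forallP th0|] := boolP [forall i, tnth theta i != 0].
  under eq_bigr => i _ do rewrite /singular_powR (negbTE (th0 i)).
  by rewrite prodEFin lee_fin pi_MBS_le_prod_powR.
rewrite negb_forall => /existsP[j /negPn /eqP thj].
rewrite (bigD1 j) //= {1}/singular_powR thj eqxx gt0_mulye ?leey //.
apply: (big_ind (fun x => 0 < x)%E) => // [u v|i _]; first exact: mule_gt0.
exact: singular_powR_gt0.
Qed.

Definition marginal_factor (gamma N : R) (y : d.-tuple R) (i : 'I_d) (x : R) : \bar R :=
  ((gauss_kernel N (tnth y i) x)%:E * singular_powR (coord_exponent blk gamma i) x)%E.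

Lemma marginal_factor_ge0 (gamma N : R) y i x : 0 <= N ->
  (0 <= marginal_factor gamma N y i x)%E.
Proof.
move=> N0; rewrite mule_ge0 ?lee_fin ?(ltW (singular_powR_gt0 _ _)) //.
by case/andP: (gauss_kernel_itv01 (tnth y i) x N0).
Qed.

Lemma measurable_marginal_factor (gamma N : R) y i :
  measurable_fun setT (marginal_factor gamma N y i).
Proof.
apply: emeasurable_funM; last exact: measurable_singular_powR.
by apply/measurable_EFinP; exact: measurable_gauss_kernel.
Qed.

Lemma integral_marginal_factor_lty (gamma N : R) y i : 0 < N ->
  0 <= coord_exponent blk gamma i < 1 ->
  (\int[lebesgue_measure]_x marginal_factor gamma N y i x < +oo)%E.
Proof.
move=> N0 a01; apply: integral_singular_powR_lty a01 _ _ (integral_gauss_kernel_lty _ N0).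
- exact: measurable_gauss_kernel.
- by move=> x; apply: gauss_kernel_itv01; exact: ltW.
Qed.

Lemma marginal_integrand_le (gamma N : R) (y theta : d.-tuple R) :
  (0 < B)%N -> (forall b, 0 < dimb blk b)%N -> 0 <= gamma -> 0 <= N ->
  ((gauss_density N y theta * pi_MBS blk gamma theta)%:E <=
   ((N / (2 * pi)) `^ (d%:R / 2))%R%:E *
   \prod_(i < d) marginal_factor gamma N y i (tnth theta i))%E.
Proof.
move=> B0 db g0 N0; rewrite gauss_densityE -mulrA EFinM big_split /= prodEFin EFinM.
apply: lee_wpmul2l; first by rewrite lee_fin powR_ge0.
apply: lee_wpmul2l; last exact: pi_MBS_le_prod_singular_powR.
rewrite lee_fin prodr_ge0 // => i _.
by case/andP: (gauss_kernel_itv01 (tnth y i) (tnth theta i) N0).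
Qed.

End marginal.

Theorem lemma10 (R : realType) (d B : nat) (blk : 'I_d -> 'I_B) (gamma N : R) :
  (1 <= d)%N ->
  (forall b : 'I_B, (1 <= dimb blk b)%N) ->
  0 < N ->
  (forall b : 'I_B, 0 <= gamma /\ gamma < B%:R * (Rb blk b + (dimb blk b)%:R)) ->
  forall y : d.-tuple R, (m_MBS blk gamma N y < +oo)%E.
Proof.
move=> d1 db N0 hg y.
have B0 : (0 < B)%N := leq_ltn_trans (leq0n _) (ltn_ord (blk (Ordinal d1))).
have g0 : 0 <= gamma := (hg (blk (Ordinal d1))).1.
have factor_ge0 i x := marginal_factor_ge0 blk gamma y i x (ltW N0).
pose K := (N / (2 * pi)) `^ (d%:R / 2).
apply: (@le_lt_trans _ _ (leb_int_tuple (fun t =>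
  K%:E * \prod_(i < d) marginal_factor blk gamma N y i (tnth t i))%E)).
  apply: le_leb_int_tuple => theta; last exact: marginal_integrand_le B0 db g0 (ltW N0).
  by rewrite lee_fin mulr_ge0 ?gauss_density_ge0 ?pi_MBS_ge0.
rewrite leb_int_tuple_prod ?lee_fin ?powR_ge0 //; last exact: measurable_marginal_factor.
rewrite lte_mul_pinfty ?lee_fin ?powR_ge0 // -ge0_fin_numE; last first.
  by rewrite prode_ge0 // => i _; exact: integral_ge0.
rewrite prode_fin_num // => i _; rewrite ge0_fin_numE; last exact: integral_ge0.
apply: integral_marginal_factor_lty N0 _.
exact: coord_exponent_itv (db _) g0 (hg _).2.
Qed.
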